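(* Let $\mathbb{F}\in\{\mathbb{R},\mathbb{C}\}$, let $\Phi=\{\varphi_i\}_{i=1}^M$ be a Parseval frame for $\mathbb{F}^N$, and let $1\le k\leq N$. Then $${N\choose k}\leq V_k(\Phi)\leq\sqrt{{M\choose k}{N\choose k}},$$ with equality in the upper bound if and only if $v_k(\Phi_K)=c_{M,N,k}$ for every $K\subseteq[M]$ with $|K|=k$, where $c_{M,N,k}=\sqrt{{M\choose k}^{-1}{N\choose k}}$; and with equality in the lower bound if and only if there is a subset $J\subseteq[M]$ with $|J|=N$ such that $\{\varphi_i\}_{i\in J}$ is an orthonormal basis of $\mathbb{F}^N$ and $\varphi_i=0$ whenever $i\notin J$.
   Context: A Parseval frame for $\mathbb{F}^N$ is a family $\{\varphi_i\}_{i=1}^M\subseteq\mathbb{F}^N$ whose $N\times M$ matrix $\Phi$ (columns $\varphi_i$) satisfies $\Phi\Phi^*=I$. For $K\subseteq[M]$, $\Phi_K$ denotes the $N\times|K|$ submatrix of columns indexed by $K$. For an $N\times k$ matrix $F$ with $k\le N$, $v_k(F)=\sqrt{\det(F^*F)}$. The total $k$-dimensional volume is $V_k(\Phi)=\sum_{|K|=k}v_k(\Phi_K)$. *)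

From HB Require Import structures.
From mathcomp Require Import all_boot all_order all_algebra.
From mathcomp Require Import all_reals.
From mathcomp Require Export complex.
Set Implicit Arguments. Unset Strict Implicit. Unset Printing Implicit Defensive.
Import Order.TTheory GRing.Theory Num.Theory.
Local Open Scope ring_scope.

(* Frames are N x M matrices whose columns are the frame vectors phi_i.
   For a field F with an involution conjF (identity for F = R, complex
   conjugation for F = C) and a square root sqrtF on nonnegative reals. *)

Section FrameDefs.
Variables (F : numFieldType) (conjF : F -> F) (sqrtF : F -> F).

Definition adjmx m n (A : 'M[F]_(m, n)) : 'M[F]_(n, m) := (map_mx conjF A)^T.

Definition parseval N M (Phi : 'M[F]_(N, M)) : Prop := Phi *m adjmx Phi = 1%:M.

Definition subcols N M (Phi : 'M[F]_(N, M)) (K : {set 'I_M}) : 'M[F]_(N, #|K|) :=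
  colsub (fun j : 'I_#|K| => enum_val j) Phi.

Definition vol N k (A : 'M[F]_(N, k)) : F := sqrtF (\det (adjmx A *m A)).

Definition total_vol N M (Phi : 'M[F]_(N, M)) (k : nat) : F :=
  \sum_(K : {set 'I_M} | #|K| == k) vol (subcols Phi K).

Definition is_ONB N M (Phi : 'M[F]_(N, M)) (J : {set 'I_M}) : Prop :=
  adjmx (subcols Phi J) *m subcols Phi J = 1%:M /\ \rank (subcols Phi J) = N.

Definition prop8_statement : Prop :=
  forall (N M k : nat) (Phi : 'M[F]_(N, M)),
    parseval Phi -> (1 <= k <= N)%N ->
    let c := sqrtF ('C(M, k)%:R^-1 * 'C(N, k)%:R) in
    [/\ 'C(N, k)%:R <= total_vol Phi k,
        total_vol Phi k <= sqrtF ('C(M, k)%:R * 'C(N, k)%:R),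
        (total_vol Phi k = sqrtF ('C(M, k)%:R * 'C(N, k)%:R) <->
           forall K : {set 'I_M}, #|K| = k -> vol (subcols Phi K) = c) &
        (total_vol Phi k = 'C(N, k)%:R <->
           exists J : {set 'I_M}, [/\ #|J| = N, is_ONB Phi J &
              forall i : 'I_M, i \notin J -> col i Phi = 0])].
End FrameDefs.

Definition complexC (R : realType) : numClosedFieldType := (R : rcfType)[i].

From HB Require Import structures.
From mathcomp Require Import all_boot all_order all_algebra all_fingroup.
From mathcomp Require Import all_reals complex ring.
Set Implicit Arguments. Unset Strict Implicit. Unset Printing Implicit Defensive.
Import Order.TTheory GRing.Theory Num.Theory.
Local Open Scope ring_scope.

(* P := Phi^* Phi is an orthogonal projection of trace N, and v_k(Phi_K)^2 is
   the principal minor det P[K,K].  Two applications of Cauchy-Binet give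
   sum_K det P[K,K] = C(N,k) and det P[K,K] = sum_L |det P[L,K]|^2
   >= det P[K,K]^2, so every squared volume lies in [0,1].  Hence
   V_k = sum_K sqrt(det P[K,K]) >= C(N,k), and Cauchy-Schwarz bounds V_k^2 by
   C(M,k) C(N,k), with equality exactly when all volumes coincide.  Equality
   in the lower bound forces every det P[K,K] into {0,1}; when det P[K,K] = 1
   all the other minors det P[L,K] vanish, which by Cramer's rule and P^2 = P
   makes the columns of P indexed by K standard basis vectors.  Counting the
   k-sets of volume 1 shows that these columns cover at least N indices, and
   the trace identity tr P = N kills every other column. *)

Section CauchyBinet.
Variable R : comPzRingType.

Lemma det_rowsub_perm n (s : 'S_n) (A : 'M[R]_n) :
  \det (rowsub s A) = (-1) ^+ s * \det A.
Proof. by rewrite -row_permEsub row_permE det_mulmx det_perm. Qed.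

Lemma det_colsub_perm n (s : 'S_n) (A : 'M[R]_n) :
  \det (colsub s A) = (-1) ^+ s * \det A.
Proof. by rewrite -col_permEsub col_permE det_mulmx det_perm odd_permV mulrC. Qed.

Lemma det_rowsub_noninj k n (h : 'I_k -> 'I_n) (B : 'M[R]_(n, k)) :
  ~~ injectiveb h -> \det (rowsub h B) = 0.
Proof.
case/injectivePn => i [j ij hij].
by rewrite (determinant_alternate ij) // => l; rewrite !mxE hij.
Qed.

Lemma det_rowsub_colsub1 k n (h : 'I_k -> 'I_n) :
  \det (rowsub h (colsub h (1%:M : 'M[R]_n))) = (injectiveb h)%:R.
Proof.
have [/injectiveP h_inj|] := boolP (injectiveb h); last exact: det_rowsub_noninj.
suff -> : rowsub h (colsub h 1%:M) = 1%:M :> 'M[R]_k by rewrite det1.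
by apply/matrixP => a b; rewrite !mxE (inj_eq h_inj).
Qed.

Lemma det_mulmx_ffun k n (A : 'M[R]_(k, n)) (B : 'M[R]_(n, k)) :
  \det (A *m B) =
  \sum_(f : {ffun 'I_k -> 'I_n}) (\prod_i A i (f i)) * \det (rowsub f B).
Proof.
rewrite /determinant.
transitivity (\sum_(s : 'S_k) \sum_(f : {ffun 'I_k -> 'I_n})
   (-1) ^+ s * ((\prod_i A i (f i)) * \prod_i B (f i) (s i))).
  apply: eq_bigr => s _; rewrite -big_distrr /=; congr (_ * _).
  transitivity (\prod_i \sum_j A i j * B j (s i)).
    by apply: eq_bigr => i _; rewrite mxE.
  by rewrite bigA_distr_bigA; apply: eq_bigr => f _; rewrite big_split.
rewrite exchange_big; apply: eq_bigr => f _; rewrite big_distrr /=.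
apply: eq_bigr => s _; rewrite mulrCA; congr (_ * (_ * _)).
by apply: eq_bigr => i _; rewrite mxE.
Qed.

(* Cauchy-Binet, summed over all maps 'I_k -> 'I_n instead of k-subsets: each
   subset occurs once per ordering, with the same product of signed minors,
   and non-injective maps contribute 0. *)
Lemma cauchy_binet k n (A : 'M[R]_(k, n)) (B : 'M[R]_(n, k)) :
  k`!%:R * \det (A *m B) =
  \sum_(h : {ffun 'I_k -> 'I_n}) \det (colsub h A) * \det (rowsub h B).
Proof.
transitivity (\sum_(s : 'S_k) \sum_(h : {ffun 'I_k -> 'I_n})
   (-1) ^+ s * (\prod_i A i (h (s i))) * \det (rowsub h B)); last first.
  rewrite exchange_big; apply: eq_bigr => h _.
  rewrite [X in _ = X * _]/determinant big_distrl /=.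
  apply: eq_bigr => s _; congr (_ * _ * _).
  by apply: eq_bigr => i _; rewrite mxE.
rewrite -card_Sn mulr_natl -sumr_const; apply: eq_bigr => s _.
rewrite det_mulmx_ffun.
rewrite (reindex_inj (h := fun g : {ffun 'I_k -> 'I_n} => [ffun i => g (s i)])); last first.
  move=> g1 g2 /ffunP E; apply/ffunP => i; have := E ((s^-1)%g i).
  by rewrite !ffunE permKV.
apply: eq_bigr => g _.
have -> : rowsub [ffun i => g (s i)] B = rowsub s (rowsub g B).
  by apply/matrixP => i j; rewrite !mxE ffunE.
rewrite det_rowsub_perm mulrCA mulrA; congr (_ * _ * _).
by apply: eq_bigr => i _; rewrite ffunE.
Qed.

Lemma mul_row_adj n (G : 'M[R]_n) (y : 'rV[R]_n) a :
  (y *m \adj G) 0 a = \det (\matrix_(i, b) if i == a then y 0 b else G i b).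
Proof.
rewrite mxE (expand_det_row _ a); apply: eq_bigr => b _.
rewrite !mxE eqxx; congr (_ * _).
rewrite /cofactor; congr (_ * \det _); apply/matrixP => i j; rewrite !mxE.
by rewrite eq_sym (negbTE (neq_lift a i)).
Qed.

Lemma principal_submx_idem n k (Q : 'M[R]_n) (f : 'I_k -> 'I_n) : injective f ->
  Q *m Q = Q -> (forall j b, j \notin [set f i | i : 'I_k] -> Q j (f b) = 0) ->
  rowsub f (colsub f Q) *m rowsub f (colsub f Q) = rowsub f (colsub f Q).
Proof.
move=> f_inj QQ Q0; apply/matrixP => a b; rewrite -[in RHS]QQ !mxE.
rewrite (bigID (mem [set f i | i : 'I_k])) /= [X in _ = _ + X]big1 ?addr0; last first.
  by move=> j jf; rewrite Q0 ?mulr0.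
rewrite big_imset /=; last by move=> x y _ _; apply: f_inj.
by apply: eq_bigr => i _; rewrite !mxE.
Qed.

End CauchyBinet.

Definition rearrangements k n (f : 'I_k -> 'I_n) : {set {ffun 'I_k -> 'I_n}} :=
  [set [ffun i => f (s i)] | s : 'S_k].

Lemma inj_image_perm k n (f g : 'I_k -> 'I_n) : injective f -> injective g ->
  [set f i | i : 'I_k] = [set g i | i : 'I_k] -> exists s : 'S_k, forall i, g i = f (s i).
Proof.
move=> f_inj g_inj fg.
have fg_pre i : exists j, f j == g i.
  have : g i \in [set g i | i : 'I_k] by apply: imset_f.
  by rewrite -fg => /imsetP [j _ ->]; exists j.
pose s i := xchoose (fg_pre i).
have sE i : f (s i) = g i by apply/eqP/(xchooseP (fg_pre i)).
have s_inj : injective s by move=> i1 i2 e; apply: g_inj; rewrite -!sE e.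
by exists (perm s_inj) => i; rewrite permE sE.
Qed.

Lemma sum_ffun_image (V : nmodType) k n (G : ('I_k -> 'I_n) -> V) (H : {set 'I_n} -> V) :
  (forall f, ~~ injectiveb f -> G f = 0) ->
  (forall f, injective f -> G f = H [set f i | i : 'I_k]) ->
  \sum_(f : {ffun 'I_k -> 'I_n}) G f = (\sum_(K : {set 'I_n} | #|K| == k) H K) *+ k`!.
Proof.
move=> G0 GH.
rewrite (bigID (fun f : {ffun 'I_k -> 'I_n} => injectiveb f)) /=.
rewrite [X in _ + X]big1 ?addr0; last by move=> f /G0.
rewrite (partition_big (fun f : {ffun 'I_k -> 'I_n} => [set f i | i : 'I_k])
   (fun K : {set 'I_n} => #|K| == k)) /=; last first.
  by move=> f /injectiveP f_inj; rewrite card_imset // card_ord.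
rewrite -sumrMnl; apply: eq_bigr => K /eqP cardK.
transitivity (\sum_(f in [set f : {ffun 'I_k -> 'I_n} in ffun_on K | injectiveb f]) H K).
  apply: eq_big => f.
    rewrite inE; apply/andP/andP => [[f_inj /eqP fK]|[f_on f_inj]]; split => //.
      by apply/ffun_onP => x; rewrite -fK; apply: imset_f.
    rewrite eqEcard; apply/andP; split.
      by apply/subsetP => y /imsetP [x _ ->]; apply: (ffun_onP f_on x).
    by rewrite card_imset ?card_ord ?cardK //; apply/injectiveP.
  by move=> /andP [/injectiveP f_inj /eqP <-]; apply: GH.
by rewrite sumr_const card_inj_ffuns_on cardK card_ord ffactnn.
Qed.

Lemma ltn_bin2l n m k : (0 < k <= n)%N -> (m < n)%N -> ('C(m, k) < 'C(n, k))%N.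
Proof.
case: k => // k /andP[_ kn]; case: n kn => // n kn; rewrite ltnS => mn.
rewrite binS; apply: leq_ltn_trans (leq_bin2l _ mn) _.
by rewrite -[X in (X < _)%N]addn0 ltn_add2l bin_gt0.
Qed.

Section Gram.
Variables (F : numFieldType) (c : {rmorphism F -> F}).
Hypothesis cK : involutive c.
Hypothesis c_norm : forall x : F, x * c x = `|x| ^+ 2.

Definition gram m n (A : 'M[F]_(m, n)) : 'M[F]_n := adjmx c A *m A.

Lemma adjmxE m n (A : 'M[F]_(m, n)) i j : adjmx c A i j = c (A j i).
Proof. by rewrite /adjmx !mxE. Qed.

Lemma adjmxM m n p (A : 'M[F]_(m, n)) (B : 'M[F]_(n, p)) :
  adjmx c (A *m B) = adjmx c B *m adjmx c A.
Proof.
apply/matrixP => i j; rewrite adjmxE !mxE rmorph_sum; apply: eq_bigr => l _.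
by rewrite !adjmxE rmorphM mulrC.
Qed.

Lemma adjmxK m n (A : 'M[F]_(m, n)) : adjmx c (adjmx c A) = A.
Proof. by apply/matrixP => i j; rewrite !adjmxE cK. Qed.

Lemma det_adjmx n (A : 'M[F]_n) : \det (adjmx c A) = c (\det A).
Proof. by rewrite /adjmx det_tr det_map_mx. Qed.

Lemma adjmx_colsub m n k (f : 'I_k -> 'I_n) (A : 'M[F]_(m, n)) :
  adjmx c (colsub f A) = rowsub f (adjmx c A).
Proof. by apply/matrixP => i j; rewrite !(adjmxE, mxE). Qed.

Lemma adjmx_rowsub m n k (f : 'I_k -> 'I_m) (A : 'M[F]_(m, n)) :
  adjmx c (rowsub f A) = colsub f (adjmx c A).
Proof. by apply/matrixP => i j; rewrite !(adjmxE, mxE). Qed.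

Lemma adjmx_gram m n (A : 'M[F]_(m, n)) : adjmx c (gram A) = gram A.
Proof. by rewrite /gram adjmxM adjmxK. Qed.

Lemma gram_colsub m n k (f : 'I_k -> 'I_n) (A : 'M[F]_(m, n)) :
  gram (colsub f A) = rowsub f (colsub f (gram A)).
Proof.
apply/matrixP => i j; rewrite !mxE; apply: eq_bigr => l _.
by rewrite !(adjmxE, mxE).
Qed.

Lemma gram_diagE m n (A : 'M[F]_(m, n)) i : gram A i i = \sum_j `|A j i| ^+ 2.
Proof. by rewrite mxE; apply: eq_bigr => j _; rewrite adjmxE mulrC c_norm. Qed.

Lemma gram_diag_ge0 m n (A : 'M[F]_(m, n)) i : 0 <= gram A i i.
Proof. by rewrite gram_diagE sumr_ge0 // => j _; rewrite exprn_ge0. Qed.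

Lemma gram_diag_eq0 m n (A : 'M[F]_(m, n)) i : gram A i i = 0 -> col i A = 0.
Proof.
rewrite gram_diagE => /psumr_eq0P A0; apply/colP => j; rewrite !mxE.
by apply/eqP; rewrite -normr_eq0 -sqrf_eq0 A0 // => l _; rewrite exprn_ge0.
Qed.

Lemma det_gram_sum n k (A : 'M[F]_(n, k)) :
  k`!%:R * \det (gram A) = \sum_(h : {ffun 'I_k -> 'I_n}) `|\det (rowsub h A)| ^+ 2.
Proof.
rewrite cauchy_binet; apply: eq_bigr => h _.
by rewrite -adjmx_rowsub det_adjmx mulrC c_norm.
Qed.

Lemma det_cogram_sum k n (A : 'M[F]_(k, n)) :
  k`!%:R * \det (A *m adjmx c A) =
  \sum_(h : {ffun 'I_k -> 'I_n}) `|\det (colsub h A)| ^+ 2.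
Proof.
rewrite cauchy_binet; apply: eq_bigr => h _.
by rewrite -adjmx_colsub det_adjmx c_norm.
Qed.

Lemma det_gram_ge0 n k (A : 'M[F]_(n, k)) : 0 <= \det (gram A).
Proof.
have k_gt0 : 0 < k`!%:R :> F by rewrite ltr0n fact_gt0.
by rewrite -(pmulr_rge0 _ k_gt0) det_gram_sum sumr_ge0 // => h _; rewrite exprn_ge0.
Qed.

Lemma det_gram_colsub_noninj m n k (f : 'I_k -> 'I_n) (A : 'M[F]_(m, n)) :
  ~~ injectiveb f -> \det (gram (colsub f A)) = 0.
Proof. by move=> f_ninj; rewrite gram_colsub det_rowsub_noninj. Qed.

Lemma det_gram_colsub_perm m n k (f : 'I_k -> 'I_n) (s : 'S_k) (A : 'M[F]_(m, n)) :
  \det (gram (colsub (fun i => f (s i)) A)) = \det (gram (colsub f A)).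
Proof.
have -> : gram (colsub (fun i => f (s i)) A) = rowsub s (colsub s (gram (colsub f A))).
  by rewrite !gram_colsub; apply/matrixP => i j; rewrite !mxE.
by rewrite det_rowsub_perm det_colsub_perm mulrA -signr_addb addbb mul1r.
Qed.

Lemma det_gram_colsub_cast m n k k' (e : k' = k) (g : 'I_k' -> 'I_n) (A : 'M[F]_(m, n)) :
  \det (gram (colsub g A)) =
  \det (gram (colsub (fun i => g (cast_ord (esym e) i)) A)).
Proof.
subst k'; congr (\det (gram _)); apply: eq_colsub => i.
by congr g; apply: val_inj.
Qed.

Lemma det_gram_subcols m n k (f : 'I_k -> 'I_n) (A : 'M[F]_(m, n)) : injective f ->
  \det (gram (subcols A [set f i | i : 'I_k])) = \det (gram (colsub f A)).
Proof.
move=> f_inj; set K := [set f i | i : 'I_k].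
have cardK : #|K| = k by rewrite card_imset // card_ord.
rewrite /subcols (det_gram_colsub_cast cardK).
set g := (fun i : 'I_k => enum_val _).
have g_inj : injective g by move=> i j; rewrite /g => /enum_val_inj /cast_ord_inj.
have [s fE] : exists s : 'S_k, forall i, f i = g (s i).
  apply: inj_image_perm => //; apply/eqP.
  rewrite eqEcard !card_imset // leqnn andbT; apply/subsetP => _ /imsetP[i _ ->].
  exact: enum_valP.
by rewrite (eq_colsub _ fE) det_gram_colsub_perm.
Qed.

Lemma det_gram_ONB01 m n k (A : 'M[F]_(m, n)) (J : {set 'I_n}) (f : 'I_k -> 'I_n) :
  gram (subcols A J) = 1%:M -> (forall i, i \notin J -> col i A = 0) ->
  \det (gram (colsub f A)) = 0 \/ \det (gram (colsub f A)) = 1.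
Proof.
move=> J_ONB A0.
have gramJ y z : y \in J -> z \in J -> gram A y z = (y == z)%:R.
  move=> yJ zJ.
  have := congr1 (fun X : 'M_#|J| => X (enum_rank_in yJ y) (enum_rank_in yJ z)) J_ONB.
  rewrite /subcols gram_colsub !mxE -(inj_eq enum_val_inj) !enum_rankK_in //.
have [/injectiveP f_inj|] := boolP (injectiveb f); last first.
  by left; apply: det_gram_colsub_noninj.
have [/forallP fJ|] := boolP [forall a, f a \in J].
  right; suff -> : gram (colsub f A) = 1%:M by rewrite det1.
  by apply/matrixP => a b; rewrite gram_colsub 2![LHS]mxE gramJ // mxE (inj_eq f_inj).
rewrite negb_forall => /existsP [a /A0 fa0]; left.
rewrite (expand_det_col _ a) big1 // => i _.
rewrite !mxE big1 ?mul0r // => j _.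
by have := congr1 (fun X : 'cV_m => X j 0) fa0; rewrite !mxE => ->; rewrite mulr0.
Qed.

End Gram.

Section ParsevalFrame.
Variables (F : numFieldType) (c : {rmorphism F -> F}).
Hypothesis cK : involutive c.
Hypothesis c_norm : forall x : F, x * c x = `|x| ^+ 2.
Variables (N M : nat) (Phi : 'M[F]_(N, M)).
Hypothesis Phi_parseval : Phi *m adjmx c Phi = 1%:M.

Local Notation gram := (gram c).
Local Notation P := (gram Phi).

Lemma gram_parseval_idem : P *m P = P.
Proof. by rewrite /gram mulmxA -(mulmxA _ Phi) Phi_parseval mulmx1. Qed.

Lemma gram_gram_parseval : gram P = P.
Proof. by rewrite {1}/gram adjmx_gram // gram_parseval_idem. Qed.

Lemma mxtrace_gram_parseval : \tr P = N%:R.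
Proof. by rewrite /gram mxtrace_mulC Phi_parseval mxtrace1. Qed.

(* Since P^* P = P, the Gram matrix of Phi_f is also that of P_f, so
   Cauchy-Binet expands det P[f,f] into the squared minors det P[h,f]; the k!
   rearrangements h of f each contribute det P[f,f]^2. *)
Lemma det_gram_parseval_split k (f : 'I_k -> 'I_M) : injective f ->
  k`!%:R * \det (gram (colsub f Phi)) =
  k`!%:R * \det (gram (colsub f Phi)) ^+ 2 +
  \sum_(h | h \notin rearrangements f) `|\det (rowsub h (colsub f P))| ^+ 2.
Proof.
move=> f_inj; set D := \det _.
have PfE : gram (colsub f P) = gram (colsub f Phi).
  by rewrite !gram_colsub gram_gram_parseval.
rewrite {1}/D -PfE det_gram_sum // (bigID (mem (rearrangements f))) /=.
congr (_ + _); rewrite big_imset /=; last first.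
  move=> s1 s2 _ _ /ffunP s12; apply/permP => i; apply: f_inj.
  by have := s12 i; rewrite !ffunE.
rewrite -card_Sn mulr_natl -sumr_const; apply: eq_bigr => s _.
have -> : rowsub [ffun i => f (s i)] (colsub f P) = rowsub s (rowsub f (colsub f P)).
  by apply/matrixP => i j; rewrite !mxE ffunE.
rewrite det_rowsub_perm -gram_colsub -/D normrM normr_sign mul1r.
by rewrite ger0_norm // det_gram_ge0.
Qed.

Lemma det_gram_parseval_le1 k (f : 'I_k -> 'I_M) : \det (gram (colsub f Phi)) <= 1.
Proof.
have [/injectiveP f_inj|] := boolP (injectiveb f); last first.
  by move/det_gram_colsub_noninj->; rewrite ler01.
set D := \det _; have k_gt0 : 0 < k`!%:R :> F by rewrite ltr0n fact_gt0.
have D2_le : D ^+ 2 <= D.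
  rewrite -(ler_pM2l k_gt0) [X in _ <= X](det_gram_parseval_split f_inj) lerDl.
  by rewrite sumr_ge0 // => h _; rewrite exprn_ge0.
have := det_gram_ge0 c_norm (colsub f Phi); rewrite -/D le0r.
case/predU1P => [->|D_gt0]; first exact: ler01.
by rewrite -(ler_pM2l D_gt0) mulr1 -expr2.
Qed.

Lemma det_gram_parseval1_inj k (f : 'I_k -> 'I_M) :
  \det (gram (colsub f Phi)) = 1 -> injective f.
Proof.
move=> D1; apply/injectiveP; apply: contra_eqT D1.
by move/det_gram_colsub_noninj->; rewrite eq_sym oner_neq0.
Qed.

Lemma minor_parseval_eq0 k (f : 'I_k -> 'I_M) h :
  \det (gram (colsub f Phi)) = 1 -> h \notin rearrangements f ->
  \det (rowsub h (colsub f P)) = 0.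
Proof.
move=> D1 hf; have := det_gram_parseval_split (det_gram_parseval1_inj D1).
rewrite D1 expr1n mulr1 -[X in X = _]addr0 => /addrI/esym minors0.
apply/eqP; rewrite -normr_eq0 -sqrf_eq0; apply/eqP.
by apply: (psumr_eq0P _ minors0 hf) => h' _; apply: exprn_ge0.
Qed.

(* If j is outside the image of f, every minor of P obtained by replacing one
   row f a of P[f,f] by row j of P[:,f] is such a vanishing minor, so Cramer's
   rule forces that row to be 0. *)
Lemma gram_parseval_offimage k (f : 'I_k -> 'I_M) j b :
  \det (gram (colsub f Phi)) = 1 -> (forall i, f i != j) -> P j (f b) = 0.
Proof.
move=> D1 f_j; pose G := rowsub f (colsub f P); pose y := \row_b' P j (f b').
have G_adj : \adj G *m G = 1%:M by rewrite mul_adj_mx /G -gram_colsub D1.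
have y_adj : y *m \adj G = 0.
  apply/rowP => a; rewrite mul_row_adj mxE.
  pose h := [ffun i => if i == a then j else f i].
  rewrite -(minor_parseval_eq0 (h := h) D1); last first.
    apply/imsetP => -[s _ /ffunP/(_ a)]; rewrite !ffunE eqxx => jE.
    by have := f_j (s a); rewrite -jE eqxx.
  by congr (\det _); apply/matrixP => i b'; rewrite !mxE ffunE; case: (i == a).
have : y *m (\adj G *m G) = 0 by rewrite mulmxA y_adj mul0mx.
by rewrite G_adj mulmx1 => /rowP/(_ b); rewrite !mxE.
Qed.

Lemma gram_parseval_image k (f : 'I_k -> 'I_M) a b :
  \det (gram (colsub f Phi)) = 1 -> P (f a) (f b) = (a == b)%:R.
Proof.
move=> D1; have f_inj := det_gram_parseval1_inj D1.
pose G := rowsub f (colsub f P).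
have G_unit : G \in unitmx by rewrite unitmxE /G -gram_colsub D1 unitr1.
have GG : G *m G = G.
  apply: principal_submx_idem => // [|j b' jf]; first exact: gram_parseval_idem.
  apply: gram_parseval_offimage D1 _ => i; apply: contraNneq jf => <-.
  exact: imset_f.
have G1 : G = 1%:M by rewrite -[LHS](mulKmx G_unit) GG mulVmx.
by have := congr1 (fun X : 'M_k => X a b) G1; rewrite !mxE.
Qed.

Lemma sum_det_gram_parseval k :
  \sum_(f : {ffun 'I_k -> 'I_M}) \det (gram (colsub f Phi)) = ('C(N, k) * k`!)%:R.
Proof.
have k_neq0 : k`!%:R != 0 :> F by rewrite pnatr_eq0 -lt0n fact_gt0.
apply: (mulfI k_neq0); rewrite mulr_sumr.
under eq_bigr do rewrite det_gram_sum //.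
rewrite exchange_big /=.
transitivity (\sum_(h : {ffun 'I_k -> 'I_N}) k`!%:R * (injectiveb h)%:R :> F).
  apply: eq_bigr => h _; rewrite -det_rowsub_colsub1 -Phi_parseval.
  have -> : rowsub h (colsub h (Phi *m adjmx c Phi)) =
            rowsub h Phi *m adjmx c (rowsub h Phi).
    rewrite adjmx_rowsub; apply/matrixP => a b; rewrite !mxE.
    by apply: eq_bigr => l _; rewrite !mxE.
  rewrite det_cogram_sum //; apply: eq_bigr => f _; congr (`|\det _| ^+ 2).
  by apply/matrixP => a b; rewrite !mxE.
rewrite -mulr_sumr; congr (_ * _).
have cardE : #|[set f : {ffun 'I_k -> 'I_N} | injectiveb f]| = ('C(N, k) * k`!)%N.
  by rewrite card_inj_ffuns !card_ord bin_ffact.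
rewrite -cardE -sum1_card natr_sum [RHS]big_mkcond; apply: eq_bigr => h _.
by rewrite inE; case: (injectiveb h).
Qed.

Lemma sum_det_gram_subcols_parseval k :
  \sum_(K : {set 'I_M} | #|K| == k) \det (gram (subcols Phi K)) = 'C(N, k)%:R.
Proof.
have k_neq0 : k`!%:R != 0 :> F by rewrite pnatr_eq0 -lt0n fact_gt0.
apply: (mulIf k_neq0); rewrite -natrM -sum_det_gram_parseval mulr_natr.
symmetry; apply: (sum_ffun_image (G := fun f => \det (gram (colsub f Phi)))).
  by move=> f f_ninj; apply: det_gram_colsub_noninj.
by move=> f f_inj; rewrite det_gram_subcols.
Qed.

Lemma gram_parseval_col_delta (K : {set 'I_M}) i j :
  \det (gram (subcols Phi K)) = 1 -> i \in K -> P j i = (j == i)%:R.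
Proof.
rewrite /subcols => K1 iK; rewrite -(enum_rankK_in iK iK).
have [jK|jK] := boolP (j \in K).
  by rewrite -(enum_rankK_in jK jK) (gram_parseval_image _ _ K1) (inj_eq enum_val_inj).
rewrite (gram_parseval_offimage _ K1) => [|a]; last first.
  by apply: contraNneq jK => <-; apply: enum_valP.
by rewrite enum_rankK_in //; case: eqP jK => [->|//]; rewrite iK.
Qed.

(* tr P = N, with P = 1 on the columns in U and P_ii >= 0 elsewhere, forces
   #|U| = N and P_ii = 0 off U. *)
Lemma parseval_ONB_of_delta (U : {set 'I_M}) :
  (N <= #|U|)%N -> (forall i j, i \in U -> P j i = (j == i)%:R) ->
  [/\ #|U| = N, is_ONB c Phi U & forall i, i \notin U -> col i Phi = 0].
Proof.
move=> NU U_delta.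
have trE : N%:R = #|U|%:R + \sum_(i | i \notin U) P i i.
  rewrite -mxtrace_gram_parseval /mxtrace (bigID (mem U)) /=; congr (_ + _).
  by rewrite -sumr_const; apply: eq_bigr => i iU; rewrite U_delta ?eqxx.
have rest_ge0 : 0 <= \sum_(i | i \notin U) P i i.
  by apply: sumr_ge0 => i _; apply: gram_diag_ge0.
have cardU : #|U| = N by apply/eqP; rewrite eqn_leq NU andbT -(ler_nat F) trE lerDl.
have rest0 : \sum_(i | i \notin U) P i i = 0.
  by apply: (addrI N%:R); rewrite addr0 [RHS]trE cardU.
have gramU : gram (subcols Phi U) = 1%:M.
  apply/matrixP => a b; rewrite /subcols gram_colsub 2![LHS]mxE U_delta ?enum_valP //.
  by rewrite mxE (inj_eq enum_val_inj).
split => //; first split => //.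
  apply/eqP; rewrite eqn_leq rank_leq_row /= -[X in (X <= _)%N]cardU.
  by rewrite -[X in (X <= _)%N](mxrank1 F #|U|) -gramU mxrankM_maxr.
move=> i iU; apply: (gram_diag_eq0 c_norm).
by apply: (psumr_eq0P (fun j _ => gram_diag_ge0 c_norm Phi j) rest0).
Qed.

Lemma card_det_gram_subcols1 k :
  (forall K : {set 'I_M}, #|K| = k ->
     \det (gram (subcols Phi K)) = 0 \/ \det (gram (subcols Phi K)) = 1) ->
  #|[set K : {set 'I_M} | (#|K| == k) && (\det (gram (subcols Phi K)) == 1)]| = 'C(N, k).
Proof.
move=> vol01; apply/eqP; rewrite -(eqr_nat F) -sum_det_gram_subcols_parseval.
rewrite -sum1_card natr_sum big_mkcond [X in _ == X]big_mkcond /=.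
apply/eqP; apply: eq_bigr => K _; rewrite inE.
have [/eqP/vol01[]->|] //= := boolP (#|K| == k); first by rewrite eq_sym oner_eq0.
by rewrite eqxx.
Qed.

Lemma parseval_ONB_of_det01 k : (0 < k <= N)%N ->
  (forall K : {set 'I_M}, #|K| = k ->
     \det (gram (subcols Phi K)) = 0 \/ \det (gram (subcols Phi K)) = 1) ->
  exists J : {set 'I_M},
    [/\ #|J| = N, is_ONB c Phi J & forall i, i \notin J -> col i Phi = 0].
Proof.
move=> kN vol01.
set S := [set K : {set 'I_M} | (#|K| == k) && (\det (gram (subcols Phi K)) == 1)].
exists (\bigcup_(K in S) K); apply: parseval_ONB_of_delta => [|i j /bigcupP[K]].
  rewrite leqNgt; apply/negP => /(ltn_bin2l kN); rewrite ltnNge => /negP; apply.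
  rewrite -(card_det_gram_subcols1 vol01) -cards_draws; apply: subset_leq_card.
  apply/subsetP => K; rewrite !inE => /andP[cardK K1]; rewrite cardK andbT.
  by apply: bigcup_sup; rewrite inE cardK.
by rewrite inE => /andP[_ /eqP K1] iK; apply: gram_parseval_col_delta K1 iK.
Qed.

End ParsevalFrame.

Section SqrtSums.
Variables (F : numFieldType) (sqrtF : F -> F).
Hypothesis sqrtF_spec : forall x, 0 <= x -> 0 <= sqrtF x /\ sqrtF x ^+ 2 = x.

Lemma sqrtF_unique x y : 0 <= y -> y ^+ 2 = x -> sqrtF x = y.
Proof.
move=> y_ge0 yx; have x_ge0 : 0 <= x by rewrite -yx exprn_ge0.
have [s_ge0 sE] := sqrtF_spec x_ge0.
by apply: (pexpIrn (n := 2)); rewrite ?nnegrE // sE.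
Qed.

Lemma sqrtF_ge x : 0 <= x <= 1 -> x <= sqrtF x.
Proof.
case/andP => x_ge0 x_le1; have [s_ge0 sE] := sqrtF_spec x_ge0.
have s_le1 : sqrtF x <= 1 by rewrite -(ler_pXn2r (n := 2)) ?nnegrE ?sE ?expr1n.
by rewrite -{1}sE expr2 ler_piMr.
Qed.

Lemma sqrtF_fixed x : 0 <= x -> sqrtF x = x -> x = 0 \/ x = 1.
Proof.
move=> x_ge0 sx; have [_] := sqrtF_spec x_ge0; rewrite sx => /eqP.
rewrite expr2 -{3}(mulr1 x) -subr_eq0 -mulrBr mulf_eq0 subr_eq0.
by case/orP => /eqP ->; [left | right].
Qed.

Lemma sum_sqr_dev (I : finType) (A : pred I) (y : I -> F) :
  \sum_(i | A i) (#|A|%:R * y i - \sum_(j | A j) y j) ^+ 2 =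
  #|A|%:R * (#|A|%:R * \sum_(i | A i) y i ^+ 2 - (\sum_(j | A j) y j) ^+ 2).
Proof.
set n := #|A|%:R; set S := \sum_(j | A j) y j.
transitivity (\sum_(i | A i) (n ^+ 2 * y i ^+ 2 - (2 * n * S) * y i + S ^+ 2)).
  by apply: eq_bigr => i _; ring.
rewrite big_split /= sumrB -!mulr_sumr -/S.
have -> : \sum_(i | A i) S = S *+ #|A| by rewrite -sumr_const; apply: eq_bigl.
by rewrite -mulr_natr -/n; ring.
Qed.

Variables (I : finType) (A : pred I) (x : I -> F).
Hypothesis x01 : forall i, A i -> 0 <= x i <= 1.

Local Notation n := #|A|.
Local Notation V := (\sum_(i | A i) sqrtF (x i)).
Local Notation B := (\sum_(i | A i) x i).

Let x_ge0 i : A i -> 0 <= x i.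
Proof. by case/x01/andP. Qed.

Let sqrtF_x_ge0 i : A i -> 0 <= sqrtF (x i).
Proof. by move/x_ge0/sqrtF_spec => []. Qed.

Let V_ge0 : 0 <= V.
Proof. exact: sumr_ge0. Qed.

Let B_ge0 : 0 <= B.
Proof. exact: sumr_ge0. Qed.

Lemma sum_le_sum_sqrtF : B <= V.
Proof. by apply: ler_sum => i Ai; rewrite sqrtF_ge ?x01. Qed.

Lemma sum_sqrtF_dev :
  \sum_(i | A i) (n%:R * sqrtF (x i) - V) ^+ 2 = n%:R * (n%:R * B - V ^+ 2).
Proof.
rewrite sum_sqr_dev; congr (_ * (_ * _ - _)).
by apply: eq_bigr => i /x_ge0/sqrtF_spec[].
Qed.

Let dev_ge0 i : A i -> 0 <= (n%:R * sqrtF (x i) - V) ^+ 2.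
Proof.
move=> Ai; rewrite -realEsqr rpredB ?ger0_real //.
by rewrite mulr_ge0 ?ler0n ?sqrtF_x_ge0.
Qed.

Lemma sqr_sum_sqrtF_le : V ^+ 2 <= n%:R * B.
Proof.
have [n0|n_gt0] := posnP n.
  rewrite big_pred0 ?expr0n ?n0 ?mul0r // => i.
  by have := card0_eq n0 i; rewrite !inE.
have n_pos : 0 < n%:R :> F by rewrite ltr0n.
rewrite -subr_ge0 -(pmulr_rge0 _ n_pos) -sum_sqrtF_dev.
exact: sumr_ge0.
Qed.

Lemma sum_sqrtF_le : V <= sqrtF (n%:R * B).
Proof.
have [s_ge0 sE] := sqrtF_spec (mulr_ge0 (ler0n F n) B_ge0).
by rewrite -(ler_pXn2r (n := 2)) ?nnegrE // sE sqr_sum_sqrtF_le.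
Qed.

Lemma sum_sqrtF_eq_sqrt :
  V = sqrtF (n%:R * B) <-> forall i, A i -> sqrtF (x i) = sqrtF (n%:R^-1 * B).
Proof.
split => [VE i Ai | xE].
  have n_neq0 : n%:R != 0 :> F.
    by rewrite pnatr_eq0 -lt0n; apply/card_gt0P; exists i.
  have V2 : V ^+ 2 = n%:R * B.
    by rewrite VE; case: (sqrtF_spec (mulr_ge0 (ler0n F n) B_ge0)).
  have /psumr_eq0P/(_ i Ai)/eqP : \sum_(i | A i) (n%:R * sqrtF (x i) - V) ^+ 2 = 0.
    by rewrite sum_sqrtF_dev V2 subrr mulr0.
  rewrite sqrf_eq0 subr_eq0 => /(_ dev_ge0)/eqP nxE.
  symmetry; apply: sqrtF_unique; first exact: sqrtF_x_ge0.
  apply: (mulfI n_neq0); rewrite mulVKf //; apply: (mulfI n_neq0).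
  by rewrite -V2 -nxE; ring.
have VE : V = sqrtF (n%:R^-1 * B) *+ n.
  by rewrite -sumr_const; apply: eq_big => // i; apply: xE.
symmetry; apply: sqrtF_unique => //; rewrite VE.
have [->|n_gt0] := posnP n; first by rewrite mulr0n mul0r expr0n.
have nB_ge0 : 0 <= n%:R^-1 * B by rewrite mulr_ge0 ?invr_ge0.
have [_ cE] := sqrtF_spec nB_ge0.
rewrite -[X in X ^+ 2]mulr_natr exprMn cE; field.
by rewrite pnatr_eq0 -lt0n.
Qed.

Lemma sum_sqrtF_eq_sum : V = B <-> forall i, A i -> x i = 0 \/ x i = 1.
Proof.
split => [VB i Ai | x01'].
  have dev0 : \sum_(i | A i) (sqrtF (x i) - x i) = 0 by rewrite sumrB VB subrr.
  apply: sqrtF_fixed; first exact: x_ge0.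
  apply/eqP; rewrite -subr_eq0; apply/eqP; apply: (psumr_eq0P _ dev0 Ai) => j Aj.
  by rewrite subr_ge0 sqrtF_ge ?x01.
apply: eq_bigr => i Ai; have [->|->] := x01' i Ai.
  by apply: sqrtF_unique; rewrite ?expr0n.
by apply: sqrtF_unique; rewrite ?expr1n ?ler01.
Qed.

End SqrtSums.

Theorem parseval_total_vol_bounds (F : numFieldType) (c : {rmorphism F -> F})
    (sqrtF : F -> F) :
  involutive c -> (forall x : F, x * c x = `|x| ^+ 2) ->
  (forall x, 0 <= x -> 0 <= sqrtF x /\ sqrtF x ^+ 2 = x) ->
  prop8_statement c sqrtF.
Proof.
move=> cK c_norm sqrtF_spec N M k Phi Phi_parseval kN c0.
pose A := fun K : {set 'I_M} => #|K| == k.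
pose x := fun K : {set 'I_M} => \det (gram c (subcols Phi K)).
have x01 K : A K -> 0 <= x K <= 1.
  by rewrite det_gram_ge0 //= (det_gram_parseval_le1 cK c_norm Phi_parseval).
have cardA : #|A| = 'C(M, k).
  by have := card_draws 'I_M k; rewrite card_ord => <-; apply: eq_card => K; rewrite inE.
have sumx : \sum_(K | A K) x K = 'C(N, k)%:R.
  exact: sum_det_gram_subcols_parseval.
have := sum_le_sum_sqrtF sqrtF_spec x01; have := sum_sqrtF_le sqrtF_spec x01.
have := sum_sqrtF_eq_sqrt sqrtF_spec x01; have := sum_sqrtF_eq_sum sqrtF_spec x01.
rewrite cardA sumx => eq_sum eq_sqrt le_sqrt ge_sum; split => //.
  apply: (iff_trans eq_sqrt); split=> xE K cardK; apply: xE; exact/eqP.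
apply: (iff_trans eq_sum); split=> [x01' | [J [_ [J_ONB _] J0]] K _].
  by apply: (parseval_ONB_of_det01 cK c_norm Phi_parseval kN) => K /eqP; apply: x01'.
exact: det_gram_ONB01 J_ONB J0.
Qed.

Theorem proposition8 (R : realType) :
  prop8_statement (@id R) (@Num.sqrt R) /\
  prop8_statement (fun z : complexC R => z^*)
    (sqrtC : complexC R -> complexC R).
Proof.
split.
- apply: (@parseval_total_vol_bounds R idfun) => [//|x|x x_ge0].
  + by rewrite real_normK ?num_real // expr2.
  + by rewrite sqrtr_ge0 sqr_sqrtr.
- apply: (@parseval_total_vol_bounds (complexC R) Num.conj) => [|x|x x_ge0].
  + exact: conjCK.
  + by rewrite normCK.
  + by rewrite sqrtC_ge0 sqrtCK.
Qed.
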